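(* Consider the real ODE system $$\frac{dp}{dt}=p\,(pR(v_c)-Q(v_c)),\qquad \frac{dv_c}{dt}=-\frac{p}{4}(1+v_c^2)+\frac12(1-v_c^2),$$ with $R(v)=\frac12\left(\frac1v-v\right)$, $Q(v)=\frac12\left(\frac1v+v\right)$. Fix $c_1$ with $0<c_1<\frac{3+\sqrt{73}}{8}$ and let $p_1(v)=1+c_1H(v-1)(v-1)$, $p_2(v)=-1-c_1H(1-v)(v^{-1}-1)$ for $v>0$, where $H$ is the Heaviside function, and $\Omega=\{(v,p):v>0,\ p_2(v)\le p\le p_1(v)\}$. Then for every initial datum $(v_c(0),p(0))\in\Omega$ the solution exists for all $t>0$, satisfies $(v_c(t),p(t))\in\Omega$ for all $t>0$, $v_c(t)$ stays bounded away from $0$ and from $\infty$, and $p(t)\to0$ as $t\to\infty$.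
   Context: This system is the form, with dissipation coefficient normalized to $\nu=1$, of the pole-dynamics ODEs for the generalized Constantin–Lax–Majda equation with $a=1/2$, $\sigma=1$, written in the variable $p=\omega_{-2,i}/(v_c(1-v_c^2))$, where $v_c>0$ is the pole position parameter and $\omega_{-2,i}$ the real double-pole amplitude. *)

From Stdlib Require Import Reals Lra.
From Coquelicot Require Import Coquelicot.
Open Scope R_scope.

(* Heaviside function (value at 0 irrelevant here: it multiplies a factor vanishing at v = 1). *)
Definition Heaviside (x : R) : R := if Rle_dec 0 x then 1 else 0.

Definition Rf (v : R) : R := / 2 * (/ v - v).
Definition Qf (v : R) : R := / 2 * (/ v + v).

(* Right-hand sides of the ODE system (nu = 1, a = 1/2, sigma = 1). *)
Definition rhs_p (v p : R) : R := p * (p * Rf v - Qf v).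
Definition rhs_v (v p : R) : R := - (p / 4) * (1 + v ^ 2) + / 2 * (1 - v ^ 2).

Definition p1 (c1 v : R) : R := 1 + c1 * Heaviside (v - 1) * (v - 1).
Definition p2 (c1 v : R) : R := - 1 - c1 * Heaviside (1 - v) * (/ v - 1).

Definition Omega (c1 v p : R) : Prop := 0 < v /\ p2 c1 v <= p /\ p <= p1 c1 v.

(* Clamping the arguments of the vector field outside a compact box makes it bounded and
   globally Lipschitz, and Picard iteration then gives a global solution: with L the Lipschitz
   constant, the n-th Picard difference is O(exp (4 L t) / 2^n).
   The compact set K = Omega /\ {min v0 (1/2) <= v <= max v0 2} is forward invariant, since
   on each piece of its boundary the field points strictly inward; on the slanted piece
   p = 1 + c1 (v - 1) this is where 4 c1^2 - 3 c1 - 4 < 0, i.e. c1 < (3 + sqrt 73) / 8, is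
   used. A first-exit-time argument keeps the truncated solution in K, where
   it solves the original system. Finally p R(v) - Q(v) <= - kappa < 0 on K, so
   (p e^(kappa t))^2 is nonincreasing and p decays exponentially. *)

From Stdlib Require Import Reals Lra Psatz Classical.
From Coquelicot Require Import Coquelicot.
Open Scope R_scope.

Lemma continuous_of_lipschitz_at (f : R -> R) (L x : R) :
  (forall y, Rabs (f y - f x) <= L * Rabs (y - x)) -> continuous f x.
Proof.
  intros Hf. apply filterlim_locally. intros eps.
  assert (HL : 0 < Rabs L + 1) by (pose proof (Rabs_pos L); lra).
  assert (Hd : 0 < eps / (Rabs L + 1)) by (apply Rdiv_lt_0_compat; [apply cond_pos | lra]).
  exists (mkposreal _ Hd). intros y Hy.
  change (Rabs (y - x) < eps / (Rabs L + 1)) in Hy. change (Rabs (f y - f x) < eps).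
  apply Rle_lt_trans with ((Rabs L + 1) * Rabs (y - x)).
  - pose proof (Rabs_pos (y - x)). pose proof (RRle_abs L).
    specialize (Hf y). nra.
  - apply (Rmult_lt_compat_l (Rabs L + 1)) in Hy; [|lra].
    replace ((Rabs L + 1) * (eps / (Rabs L + 1))) with (pos eps) in Hy by (field; lra).
    exact Hy.
Qed.

Lemma Rmax0_lipschitz a b : Rabs (Rmax 0 a - Rmax 0 b) <= Rabs (a - b).
Proof.
  unfold Rmax; destruct (Rle_dec 0 a), (Rle_dec 0 b);
    unfold Rabs; repeat destruct Rcase_abs; lra.
Qed.

Lemma continuous_Rmax0 x : continuous (Rmax 0) x.
Proof.
  apply (continuous_of_lipschitz_at _ 1). intros y.
  rewrite Rmult_1_l. apply Rmax0_lipschitz.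
Qed.

Lemma ex_RInt_of_continuous (f : R -> R) a b :
  (forall x, continuous f x) -> ex_RInt f a b.
Proof. intros Hf. apply (ex_RInt_continuous (V := R_CompleteNormedModule)); auto. Qed.

Lemma RInt_lipschitz_bound (h : R -> R) (C a b : R) :
  (forall x, continuous h x) -> (forall x, Rabs (h x) <= C) ->
  Rabs (RInt h 0 a - RInt h 0 b) <= C * Rabs (a - b).
Proof.
  intros Hc Hb.
  assert (Hle : forall a b, a <= b -> Rabs (RInt h 0 a - RInt h 0 b) <= C * Rabs (a - b)).
  { intros a' b' Hab.
    rewrite <- (RInt_Chasles h 0 a' b') by (apply ex_RInt_of_continuous; auto).
    change (plus (RInt h 0 a') (RInt h a' b')) with (RInt h 0 a' + RInt h a' b').
    replace (RInt h 0 a' - (RInt h 0 a' + RInt h a' b')) with (- RInt h a' b') by ring.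
    rewrite Rabs_Ropp, (Rabs_left1 (a' - b')) by lra.
    replace (C * - (a' - b')) with ((b' - a') * C) by ring.
    apply abs_RInt_le_const; auto. apply ex_RInt_of_continuous; auto. }
  destruct (Rle_dec a b); auto.
  rewrite Rabs_minus_sym, (Rabs_minus_sym a b). apply Hle; lra.
Qed.

Lemma RInt_exp_scal (A c t : R) : c <> 0 ->
  RInt (fun s => A * exp (c * s)) 0 t = A * (exp (c * t) - 1) / c.
Proof.
  intros Hc. apply is_RInt_unique.
  replace (A * (exp (c * t) - 1) / c) with (A * exp (c * t) / c - A * exp (c * 0) / c)
    by (rewrite Rmult_0_r, exp_0; field; auto).
  apply (is_RInt_derive (fun s => A * exp (c * s) / c)).
  - intros x _. auto_derive; auto. field; auto.
  - intros x _. apply (ex_derive_continuous (V := R_NormedModule)). auto_derive; auto.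
Qed.

Lemma exp_le_compat x y : x <= y -> exp x <= exp y.
Proof.
  intros H. destruct (Rle_lt_or_eq_dec _ _ H) as [Hlt | ->]; [|lra].
  left. apply exp_increasing, Hlt.
Qed.

Lemma le_0_of_le_geometric (x D : R) : (forall n, x <= D * (1/2) ^ n) -> x <= 0.
Proof.
  intros H.
  assert (Hlim : is_lim_seq (fun n => D * (1/2) ^ n) (D * 0)).
  { apply (is_lim_seq_scal_l _ D 0). apply is_lim_seq_geom. rewrite Rabs_right; lra. }
  pose proof (is_lim_seq_le (fun _ => x) _ x (D * 0) H (is_lim_seq_const x) Hlim) as Hle.
  simpl in Hle. lra.
Qed.

Lemma half_pow_bounds n : 0 < (1/2) ^ n <= 1.
Proof. induction n; simpl; lra. Qed.

Lemma geometric_tail_bound (u : nat -> R) (A : R) :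
  (forall n, Rabs (u (S n) - u n) <= A * (1/2) ^ n) ->
  forall n k, Rabs (u (n + k)%nat - u n) <= 2 * A * (1/2) ^ n.
Proof.
  intros Hu n k.
  assert (HA : 0 <= A)
    by (specialize (Hu O); pose proof (Rabs_pos (u 1%nat - u O)); simpl in Hu; lra).
  cut (Rabs (u (n + k)%nat - u n) <= 2 * A * ((1/2) ^ n - (1/2) ^ (n + k))).
  { pose proof (half_pow_bounds (n + k)). nra. }
  induction k as [|k IH].
  - rewrite Nat.add_0_r, Rminus_diag, Rabs_R0. lra.
  - rewrite Nat.add_succ_r.
    pose proof (Rabs_triang (u (S (n + k)) - u (n + k)%nat) (u (n + k)%nat - u n)) as Htri.
    replace (u (S (n + k)) - u (n + k)%nat + (u (n + k)%nat - u n))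
      with (u (S (n + k)) - u n) in Htri by ring.
    specialize (Hu (n + k)%nat). simpl. lra.
Qed.

Lemma cauchy_geometric (u : nat -> R) (A : R) :
  (forall n, Rabs (u (S n) - u n) <= A * (1/2) ^ n) ->
  exists l, is_lim_seq u l /\ forall n, Rabs (u n - l) <= 2 * A * (1/2) ^ n.
Proof.
  intros Hu. pose proof (geometric_tail_bound u A Hu) as Htail.
  assert (HA : 0 <= A) by (specialize (Hu O); pose proof (Rabs_pos (u 1%nat - u O)); simpl in Hu; lra).
  destruct (proj2 (ex_lim_seq_cauchy_corr u)) as [l Hl].
  { intros eps.
    assert (Hg : is_lim_seq (fun n => 2 * A * (1/2) ^ n) (2 * A * 0)).
    { apply (is_lim_seq_scal_l _ (2 * A) 0). apply is_lim_seq_geom. rewrite Rabs_right; lra. }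
    rewrite Rmult_0_r in Hg. apply is_lim_seq_spec in Hg.
    destruct (Hg eps) as [N HN]. exists N.
    specialize (HN N (le_n N)). rewrite Rminus_0_r in HN.
    apply Rle_lt_trans with (1 := RRle_abs _) in HN.
    assert (Hnm : forall n m, (N <= n <= m)%nat -> Rabs (u n - u m) < eps).
    { intros n m Hnm. replace m with (n + (m - n))%nat by lia. rewrite Rabs_minus_sym.
      eapply Rle_lt_trans; [apply Htail|]. eapply Rle_lt_trans; [|exact HN].
      replace n with (N + (n - N))%nat by lia. rewrite pow_add.
      pose proof (half_pow_bounds N); pose proof (half_pow_bounds (n - N)).
      apply Rmult_le_compat_l; nra. }
    intros n m Hn Hm. destruct (Nat.le_ge_cases n m); [apply Hnm; lia|].
    rewrite Rabs_minus_sym. apply Hnm; lia. }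
  exists l. split; auto. intros n.
  assert (Hlim : is_lim_seq (fun k => Rabs (u (k + n)%nat - u n)) (Rabs (l - u n))).
  { apply (is_lim_seq_abs _ (l - u n)). apply is_lim_seq_minus'; [|apply is_lim_seq_const].
    apply (is_lim_seq_incr_n u n). exact Hl. }
  assert (Hk : forall k, Rabs (u (k + n)%nat - u n) <= 2 * A * (1/2) ^ n).
  { intros k. rewrite Nat.add_comm. apply Htail. }
  pose proof (is_lim_seq_le _ _ _ _ Hk Hlim (is_lim_seq_const _)) as Hle.
  simpl in Hle. rewrite Rabs_minus_sym. exact Hle.
Qed.

Lemma Rplus_sub_plus_l a b c : a + b - (a + c) = b - c.
Proof. ring. Qed.

Definition l1_dist (x y : R * R) : R := Rabs (fst x - fst y) + Rabs (snd x - snd y).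

Lemma l1_dist_ge0 x y : 0 <= l1_dist x y.
Proof. unfold l1_dist. pose proof (Rabs_pos (fst x - fst y)); pose proof (Rabs_pos (snd x - snd y)); lra. Qed.

Lemma l1_dist_triangle x y z : l1_dist x z <= l1_dist x y + l1_dist y z.
Proof.
  unfold l1_dist.
  pose proof (Rabs_triang (fst x - fst y) (fst y - fst z)).
  pose proof (Rabs_triang (snd x - snd y) (snd y - snd z)).
  replace (fst x - fst y + (fst y - fst z)) with (fst x - fst z) in * by ring.
  replace (snd x - snd y + (snd y - snd z)) with (snd x - snd z) in * by ring. lra.
Qed.

Lemma l1_dist_sym x y : l1_dist x y = l1_dist y x.
Proof. unfold l1_dist. rewrite (Rabs_minus_sym (fst x)), (Rabs_minus_sym (snd x)). reflexivity. Qed.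

Lemma Rabs_fst_le_l1_dist x y : Rabs (fst x - fst y) <= l1_dist x y.
Proof. unfold l1_dist. pose proof (Rabs_pos (snd x - snd y)). lra. Qed.

Lemma Rabs_snd_le_l1_dist x y : Rabs (snd x - snd y) <= l1_dist x y.
Proof. unfold l1_dist. pose proof (Rabs_pos (fst x - fst y)). lra. Qed.

Lemma l1_dist_le_0 x y : l1_dist x y <= 0 -> x = y.
Proof.
  unfold l1_dist. intros H.
  pose proof (Rabs_pos (fst x - fst y)); pose proof (Rabs_pos (snd x - snd y)).
  destruct x as [x1 x2], y as [y1 y2]; simpl in *.
  assert (Rabs (x1 - y1) = 0) by lra. assert (Rabs (x2 - y2) = 0) by lra.
  apply Rabs_eq_0 in H2. apply Rabs_eq_0 in H3. f_equal; lra.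
Qed.

Definition lipschitz_path (K : R) (Y : R -> R * R) : Prop :=
  forall t t', l1_dist (Y t) (Y t') <= K * Rabs (t - t').

Definition lipschitz_field (L : R) (g : R * R -> R) : Prop :=
  forall x y, Rabs (g x - g y) <= L * l1_dist x y.

Definition bounded_lipschitz (g : R * R -> R) : Prop :=
  exists C L, 0 <= C /\ 0 < L /\ (forall x, Rabs (g x) <= C) /\ lipschitz_field L g.

Lemma continuous_field_along_path L K g Y :
  0 <= L -> lipschitz_field L g -> lipschitz_path K Y -> forall t, continuous (fun s => g (Y s)) t.
Proof.
  intros HL Hg HY t. apply (continuous_of_lipschitz_at _ (L * K)). intros y.
  eapply Rle_trans; [apply Hg|]. rewrite Rmult_assoc. apply Rmult_le_compat_l; auto.
Qed.

Lemma RInt_field_dist L K K' g Y Z (w : R -> R) t :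
  0 <= L -> lipschitz_field L g -> lipschitz_path K Y -> lipschitz_path K' Z ->
  (forall s, continuous w s) -> 0 <= t ->
  (forall s, 0 <= s <= t -> l1_dist (Y s) (Z s) <= w s) ->
  Rabs (RInt (fun s => g (Y s)) 0 t - RInt (fun s => g (Z s)) 0 t) <= L * RInt w 0 t.
Proof.
  intros HL Hg HY HZ Hw Ht Hdist.
  pose proof (continuous_field_along_path L K g Y HL Hg HY) as HgY.
  pose proof (continuous_field_along_path L K' g Z HL Hg HZ) as HgZ.
  assert (Hdiff : forall s, continuous (fun s => g (Y s) - g (Z s)) s).
  { intros s. apply (continuous_minus (V := R_NormedModule)); auto. }
  rewrite <- (RInt_minus (V := R_CompleteNormedModule)) by (apply ex_RInt_of_continuous; auto).
  rewrite <- (RInt_scal (V := R_CompleteNormedModule)) by (apply ex_RInt_of_continuous; auto).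
  eapply Rle_trans.
  { apply abs_RInt_le; auto. apply ex_RInt_of_continuous; auto. }
  apply RInt_le; auto.
  - apply ex_RInt_of_continuous. intros s. apply continuous_Rabs_comp. auto.
  - apply ex_RInt_of_continuous. intros s. apply (continuous_scal_r (V := R_NormedModule)). auto.
  - intros s Hs. eapply Rle_trans; [apply Hg|]. apply Rmult_le_compat_l; auto. apply Hdist; lra.
Qed.

Section Picard.

Variables (g1 g2 : R * R -> R) (C L : R) (x0 : R * R).
Hypothesis C_ge0 : 0 <= C.
Hypothesis L_gt0 : 0 < L.
Hypothesis g1_bounded : forall x, Rabs (g1 x) <= C.
Hypothesis g2_bounded : forall x, Rabs (g2 x) <= C.
Hypothesis g1_lipschitz : lipschitz_field L g1.
Hypothesis g2_lipschitz : lipschitz_field L g2.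

(* The time is clamped at 0 so that the Picard operator is defined on all of R. *)
Definition picard (Y : R -> R * R) (t : R) : R * R :=
  (fst x0 + RInt (fun s => g1 (Y s)) 0 (Rmax 0 t),
   snd x0 + RInt (fun s => g2 (Y s)) 0 (Rmax 0 t)).

Lemma picard_Rmax0 Y t : picard Y (Rmax 0 t) = picard Y t.
Proof. unfold picard. rewrite (Rmax_right 0 (Rmax 0 t)) by apply Rmax_l. reflexivity. Qed.

Lemma picard_at_0 Y : picard Y 0 = x0.
Proof.
  unfold picard. rewrite Rmax_left, !RInt_point by lra.
  destruct x0; simpl. f_equal; apply Rplus_0_r.
Qed.

Lemma picard_lipschitz K Y : lipschitz_path K Y -> lipschitz_path (2 * C) (picard Y).
Proof.
  intros HY t t'.
  assert (Hcomp : forall g, (forall x, Rabs (g x) <= C) -> lipschitz_field L g ->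
    Rabs (RInt (fun s => g (Y s)) 0 (Rmax 0 t) - RInt (fun s => g (Y s)) 0 (Rmax 0 t'))
      <= C * Rabs (t - t')).
  { intros g Hb Hg. eapply Rle_trans.
    - apply RInt_lipschitz_bound; auto.
      apply (continuous_field_along_path L K); auto; lra.
    - apply Rmult_le_compat_l; auto. apply Rmax0_lipschitz. }
  pose proof (Hcomp g1 g1_bounded g1_lipschitz).
  pose proof (Hcomp g2 g2_bounded g2_lipschitz).
  unfold l1_dist, picard; simpl. rewrite !Rplus_sub_plus_l. lra.
Qed.

Lemma picard_dist K K' Y Z (w : R -> R) t :
  lipschitz_path K Y -> lipschitz_path K' Z -> (forall s, continuous w s) -> 0 <= t ->
  (forall s, 0 <= s <= t -> l1_dist (Y s) (Z s) <= w s) ->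
  l1_dist (picard Y t) (picard Z t) <= 2 * L * RInt w 0 t.
Proof.
  intros HY HZ Hw Ht Hdist. unfold l1_dist, picard; simpl.
  rewrite !Rplus_sub_plus_l, Rmax_right by exact Ht.
  pose proof (RInt_field_dist L K K' g1 Y Z w t ltac:(lra) g1_lipschitz HY HZ Hw Ht Hdist).
  pose proof (RInt_field_dist L K K' g2 Y Z w t ltac:(lra) g2_lipschitz HY HZ Hw Ht Hdist).
  lra.
Qed.

Fixpoint picard_iter (n : nat) : R -> R * R :=
  match n with
  | O => fun _ => x0
  | S k => picard (picard_iter k)
  end.

Lemma picard_iter_lipschitz n : lipschitz_path (2 * C) (picard_iter n).
Proof.
  induction n as [|n IH]; simpl.
  - intros t t'. unfold l1_dist. rewrite !Rminus_diag, Rabs_R0.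
    pose proof (Rabs_pos (t - t')). nra.
  - exact (picard_lipschitz _ _ IH).
Qed.

Lemma picard_iter_Rmax0 n t : picard_iter n (Rmax 0 t) = picard_iter n t.
Proof. destruct n; [reflexivity | apply picard_Rmax0]. Qed.

(* With the weight [exp (rate t)], successive Picard differences shrink by a factor 1/2. *)
Let rate := 4 * L.
Let amp := C / (2 * L).

Lemma amp_ge0 : 0 <= amp.
Proof. unfold amp. apply Rdiv_le_0_compat; lra. Qed.

Lemma picard_iter_step n t : 0 <= t ->
  l1_dist (picard_iter (S n) t) (picard_iter n t) <= amp * exp (rate * t) * (1/2) ^ n.
Proof.
  pose proof amp_ge0 as Hamp. revert t. induction n as [|n IH]; intros t Ht.
  - replace (picard_iter 0 t) with (picard (picard_iter 0) 0) by apply picard_at_0.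
    eapply Rle_trans; [apply (picard_lipschitz 0)|].
    { intros s s'. unfold l1_dist. rewrite !Rminus_diag, Rabs_R0, Rmult_0_l. lra. }
    pose proof (exp_ineq1_le (rate * t)).
    rewrite Rminus_0_r, Rabs_right, Rmult_1_r by lra.
    replace (2 * C * t) with (amp * (rate * t)) by (unfold amp, rate; field; lra).
    apply Rmult_le_compat_l; lra.
  - change (picard_iter (S (S n))) with (picard (picard_iter (S n))).
    change (picard_iter (S n)) with (picard (picard_iter n)) at 2.
    eapply Rle_trans.
    + apply (picard_dist (2 * C) (2 * C) _ _ (fun s => amp * (1/2) ^ n * exp (rate * s)));
        auto using picard_iter_lipschitz.
      * intros s. apply (ex_derive_continuous (V := R_NormedModule)). auto_derive; auto.
      * intros s Hs. replace (amp * (1/2) ^ n * exp (rate * s))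
          with (amp * exp (rate * s) * (1/2) ^ n) by ring. apply IH; lra.
    + rewrite RInt_exp_scal by (unfold rate; lra).
      pose proof (exp_pos (rate * t)). pose proof (half_pow_bounds n).
      replace (2 * L * (amp * (1/2) ^ n * (exp (rate * t) - 1) / rate))
        with (amp * (1/2) ^ n * (exp (rate * t) - 1) / 2) by (unfold rate; field; lra).
      simpl. assert (0 <= amp * (1/2) ^ n) by nra. nra.
Qed.

Lemma picard_iter_step_Rmax0 n t :
  l1_dist (picard_iter (S n) t) (picard_iter n t)
    <= amp * exp (rate * Rmax 0 t) * (1/2) ^ n.
Proof. rewrite <- !(picard_iter_Rmax0 _ t). apply picard_iter_step, Rmax_l. Qed.

Definition picard_limit (t : R) : R * R :=
  (real (Lim_seq (fun n => fst (picard_iter n t))),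
   real (Lim_seq (fun n => snd (picard_iter n t)))).

Lemma picard_limit_dist n t :
  l1_dist (picard_iter n t) (picard_limit t) <= 4 * amp * exp (rate * Rmax 0 t) * (1/2) ^ n.
Proof.
  assert (Hcomp : forall pr : R * R -> R, (forall x y, Rabs (pr x - pr y) <= l1_dist x y) ->
    Rabs (pr (picard_iter n t) - real (Lim_seq (fun k => pr (picard_iter k t))))
      <= 2 * (amp * exp (rate * Rmax 0 t)) * (1/2) ^ n).
  { intros pr Hpr.
    destruct (cauchy_geometric (fun k => pr (picard_iter k t)) (amp * exp (rate * Rmax 0 t)))
      as [l [Hl Hb]].
    - intros k. eapply Rle_trans; [apply Hpr | apply picard_iter_step_Rmax0].
    - rewrite (is_lim_seq_unique _ _ Hl). apply Hb. }
  pose proof (Hcomp fst Rabs_fst_le_l1_dist). pose proof (Hcomp snd Rabs_snd_le_l1_dist).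
  unfold l1_dist at 1, picard_limit; simpl. lra.
Qed.

Lemma picard_limit_lipschitz : lipschitz_path (2 * C) picard_limit.
Proof.
  intros t t'.
  cut (l1_dist (picard_limit t) (picard_limit t') - 2 * C * Rabs (t - t') <= 0); [lra|].
  apply (le_0_of_le_geometric _ (4 * amp * exp (rate * Rmax 0 t) + 4 * amp * exp (rate * Rmax 0 t'))).
  intros n.
  pose proof (l1_dist_triangle (picard_limit t) (picard_iter n t) (picard_limit t')).
  pose proof (l1_dist_triangle (picard_iter n t) (picard_iter n t') (picard_limit t')).
  pose proof (picard_iter_lipschitz n t t').
  pose proof (picard_limit_dist n t) as Ht. rewrite l1_dist_sym in Ht.
  pose proof (picard_limit_dist n t'). lra.
Qed.

Lemma picard_limit_fixed t : 0 <= t -> picard_limit t = picard picard_limit t.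
Proof.
  intros Ht. set (D := 4 * amp * exp (rate * t)).
  assert (HD : 0 <= D) by (unfold D; pose proof amp_ge0; pose proof (exp_pos (rate * t)); nra).
  assert (Hunif : forall n s, 0 <= s <= t ->
            l1_dist (picard_iter n s) (picard_limit s) <= D * (1/2) ^ n).
  { intros n s Hs. eapply Rle_trans; [apply picard_limit_dist|]. rewrite Rmax_right by lra.
    assert (exp (rate * s) <= exp (rate * t)) by (apply exp_le_compat; unfold rate; nra).
    pose proof amp_ge0. pose proof (half_pow_bounds n). unfold D.
    apply Rmult_le_compat_r; [lra|]. apply Rmult_le_compat_l; lra. }
  apply l1_dist_le_0, (le_0_of_le_geometric _ (D + 2 * L * (t * D))). intros n.
  pose proof (l1_dist_triangle (picard_limit t) (picard_iter (S n) t) (picard picard_limit t)).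
  pose proof (Hunif (S n) t ltac:(lra)) as Hlast. rewrite l1_dist_sym in Hlast.
  assert (Hint : l1_dist (picard_iter (S n) t) (picard picard_limit t)
                   <= 2 * L * RInt (fun _ => D * (1/2) ^ n) 0 t).
  { apply (picard_dist (2 * C) (2 * C));
      auto using picard_iter_lipschitz, picard_limit_lipschitz, continuous_const. }
  rewrite RInt_const, Rminus_0_r in Hint.
  change (scal t (D * (1/2) ^ n)) with (t * (D * (1/2) ^ n)) in Hint.
  change ((1/2) ^ S n) with (1/2 * (1/2) ^ n) in Hlast.
  pose proof (half_pow_bounds n). nra.
Qed.

Lemma is_derive_const_plus_RInt (h : R -> R) a t : (forall s, continuous h s) ->
  is_derive (fun s => a + RInt h 0 s) t (h t).
Proof.
  intros Hh.
  assert (HI : is_derive (fun s => RInt h 0 s) t (h t)).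
  { apply (is_derive_RInt (V := R_CompleteNormedModule) h _ 0 t); auto.
    apply filter_forall. intros b. apply (RInt_correct (V := R_CompleteNormedModule)).
    apply ex_RInt_of_continuous; auto. }
  pose proof (is_derive_plus (K := R_AbsRing) (V := R_NormedModule) _ _ t _ _
    (is_derive_const a t) HI) as H.
  rewrite plus_zero_l in H. exact H.
Qed.

Theorem picard_global_solution :
  exists w : R -> R * R, w 0 = x0 /\ forall t, 0 <= t ->
    is_derive (fun s => fst (w s)) t (g1 (w t)) /\
    is_derive (fun s => snd (w s)) t (g2 (w t)).
Proof.
  set (w t := (fst x0 + RInt (fun s => g1 (picard_limit s)) 0 t,
               snd x0 + RInt (fun s => g2 (picard_limit s)) 0 t)).
  assert (Hw : forall t, 0 <= t -> w t = picard_limit t).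
  { intros t Ht. rewrite picard_limit_fixed by exact Ht. unfold picard.
    rewrite Rmax_right by exact Ht. reflexivity. }
  exists w. split.
  - unfold w. rewrite !RInt_point. destruct x0; simpl. f_equal; apply Rplus_0_r.
  - intros t Ht. rewrite Hw by exact Ht. split;
      apply is_derive_const_plus_RInt;
      apply (continuous_field_along_path L (2 * C)); auto using picard_limit_lipschitz; lra.
Qed.

End Picard.

Lemma lipschitz_field_weaken L L' g :
  L <= L' -> lipschitz_field L g -> lipschitz_field L' g.
Proof.
  intros HL Hg x y. eapply Rle_trans; [apply Hg|].
  apply Rmult_le_compat_r; [apply l1_dist_ge0 | exact HL].
Qed.

Theorem global_solution_of_bounded_lipschitz (g1 g2 : R * R -> R) (x0 : R * R) :
  bounded_lipschitz g1 -> bounded_lipschitz g2 ->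
  exists w : R -> R * R, w 0 = x0 /\ forall t, 0 <= t ->
    is_derive (fun s => fst (w s)) t (g1 (w t)) /\
    is_derive (fun s => snd (w s)) t (g2 (w t)).
Proof.
  intros [C1 [L1 [HC1 [HL1 [Hb1 Hl1]]]]] [C2 [L2 [HC2 [HL2 [Hb2 Hl2]]]]].
  apply (picard_global_solution g1 g2 (C1 + C2) (L1 + L2)); try lra.
  - intros x. specialize (Hb1 x). lra.
  - intros x. specialize (Hb2 x). lra.
  - apply (lipschitz_field_weaken L1); [lra | exact Hl1].
  - apply (lipschitz_field_weaken L2); [lra | exact Hl2].
Qed.

Definition clamp (lo hi x : R) : R := Rmax lo (Rmin hi x).

Lemma clamp_bounds lo hi x : lo <= hi -> lo <= clamp lo hi x <= hi.
Proof. intros; unfold clamp, Rmax, Rmin; repeat destruct Rle_dec; lra. Qed.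

Lemma clamp_id lo hi x : lo <= x <= hi -> clamp lo hi x = x.
Proof. intros; unfold clamp, Rmax, Rmin; repeat destruct Rle_dec; lra. Qed.

Lemma clamp_lipschitz lo hi x y : lo <= hi -> Rabs (clamp lo hi x - clamp lo hi y) <= Rabs (x - y).
Proof.
  intros; unfold clamp, Rmax, Rmin; repeat destruct Rle_dec;
    unfold Rabs; repeat destruct Rcase_abs; lra.
Qed.

Section Box.

Variables (m M P : R).
Hypothesis m_gt0 : 0 < m.

Definition in_box (a b : R) : Prop := m <= a <= M /\ - P <= b <= P.

Definition box_lipschitz (f : R -> R -> R) : Prop :=
  exists Lf Bf, 0 <= Lf /\ forall a b a' b', in_box a b -> in_box a' b' ->
    Rabs (f a b) <= Bf /\ Rabs (f a b - f a' b') <= Lf * (Rabs (a - a') + Rabs (b - b')).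

Lemma box_lipschitz_const k : box_lipschitz (fun _ _ => k).
Proof.
  exists 0, (Rabs k). split; [lra|]. intros a b a' b' _ _.
  rewrite Rminus_diag, Rabs_R0, Rmult_0_l. lra.
Qed.

Lemma box_lipschitz_fst : box_lipschitz (fun a _ => a).
Proof.
  exists 1, M. split; [lra|]. intros a b a' b' [Ha _] _. split.
  - rewrite Rabs_right; lra.
  - pose proof (Rabs_pos (b - b')). lra.
Qed.

Lemma box_lipschitz_snd : box_lipschitz (fun _ b => b).
Proof.
  exists 1, P. split; [lra|]. intros a b a' b' [_ Hb] _. split.
  - apply Rabs_le; lra.
  - pose proof (Rabs_pos (a - a')). lra.
Qed.

Lemma box_lipschitz_inv : box_lipschitz (fun a _ => / a).
Proof.
  assert (Hm2 : 0 < / (m * m)) by (apply Rinv_0_lt_compat; nra).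
  exists (/ (m * m)), (/ m). split; [lra|].
  intros a b a' b' [Ha _] [Ha' _]. split.
  - rewrite Rabs_right by (apply Rle_ge, Rlt_le, Rinv_0_lt_compat; lra).
    apply Rinv_le_contravar; lra.
  - replace (/ a - / a') with ((a' - a) * / (a * a')) by (field; lra).
    rewrite Rabs_mult, Rabs_minus_sym, (Rabs_right (/ (a * a')))
      by (apply Rle_ge, Rlt_le, Rinv_0_lt_compat; nra).
    assert (/ (a * a') <= / (m * m)) by (apply Rinv_le_contravar; nra).
    pose proof (Rabs_pos (a - a')); pose proof (Rabs_pos (b - b')). nra.
Qed.

Lemma box_lipschitz_plus f g :
  box_lipschitz f -> box_lipschitz g -> box_lipschitz (fun a b => f a b + g a b).
Proof.
  intros [L1 [B1 [HL1 H1]]] [L2 [B2 [HL2 H2]]]. exists (L1 + L2), (B1 + B2). split; [lra|].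
  intros a b a' b' Hab Hab'.
  destruct (H1 _ _ _ _ Hab Hab') as [Hf Hf']. destruct (H2 _ _ _ _ Hab Hab') as [Hg Hg'].
  split.
  - eapply Rle_trans; [apply Rabs_triang | lra].
  - replace (f a b + g a b - (f a' b' + g a' b')) with ((f a b - f a' b') + (g a b - g a' b'))
      by ring.
    eapply Rle_trans; [apply Rabs_triang | lra].
Qed.

Lemma box_lipschitz_mult f g :
  box_lipschitz f -> box_lipschitz g -> box_lipschitz (fun a b => f a b * g a b).
Proof.
  intros [L1 [B1 [HL1 H1]]] [L2 [B2 [HL2 H2]]].
  exists (Rabs B1 * L2 + Rabs B2 * L1), (B1 * B2). split.
  { pose proof (Rabs_pos B1); pose proof (Rabs_pos B2); nra. }
  intros a b a' b' Hab Hab'.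
  destruct (H1 _ _ _ _ Hab Hab') as [Hf Hf']. destruct (H2 _ _ _ _ Hab Hab') as [Hg Hg'].
  destruct (H2 _ _ _ _ Hab' Hab) as [Hg2 _].
  set (D := Rabs (a - a') + Rabs (b - b')) in *.
  pose proof (Rabs_pos (f a b)); pose proof (Rabs_pos (g a' b')).
  pose proof (Rabs_pos (f a b - f a' b')); pose proof (Rabs_pos (g a b - g a' b')).
  split.
  - rewrite Rabs_mult. apply Rmult_le_compat; auto using Rabs_pos.
  - replace (f a b * g a b - f a' b' * g a' b')
      with (f a b * (g a b - g a' b') + g a' b' * (f a b - f a' b')) by ring.
    eapply Rle_trans; [apply Rabs_triang|]. rewrite !Rabs_mult.
    assert (Rabs (f a b) <= Rabs B1) by (eapply Rle_trans; [exact Hf | apply RRle_abs]).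
    assert (Rabs (g a' b') <= Rabs B2) by (eapply Rle_trans; [exact Hg2 | apply RRle_abs]).
    assert (Rabs (f a b) * Rabs (g a b - g a' b') <= Rabs B1 * (L2 * D))
      by (apply Rmult_le_compat; auto).
    assert (Rabs (g a' b') * Rabs (f a b - f a' b') <= Rabs B2 * (L1 * D))
      by (apply Rmult_le_compat; auto).
    lra.
Qed.

Lemma box_lipschitz_ext f g : (forall a b, f a b = g a b) -> box_lipschitz f -> box_lipschitz g.
Proof.
  intros E [Lf [Bf [HL H]]]. exists Lf, Bf. split; auto.
  intros a b a' b'. rewrite <- !E. auto.
Qed.

Lemma bounded_lipschitz_clamp f : m <= M -> 0 <= P -> box_lipschitz f ->
  bounded_lipschitz (fun x => f (clamp m M (fst x)) (clamp (- P) P (snd x))).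
Proof.
  intros HmM HP [Lf [Bf [HL H]]].
  assert (Hin : forall x, in_box (clamp m M (fst x)) (clamp (- P) P (snd x)))
    by (intros x; split; apply clamp_bounds; lra).
  exists (Rabs Bf), (Lf + 1). split; [apply Rabs_pos|]. split; [lra|]. split.
  - intros x. destruct (H _ _ _ _ (Hin x) (Hin x)) as [Hb _].
    eapply Rle_trans; [exact Hb | apply RRle_abs].
  - intros x y. destruct (H _ _ _ _ (Hin x) (Hin y)) as [_ Hl].
    eapply Rle_trans; [exact Hl|].
    pose proof (clamp_lipschitz m M (fst x) (fst y) HmM).
    pose proof (clamp_lipschitz (- P) P (snd x) (snd y) ltac:(lra)).
    pose proof (l1_dist_ge0 x y).
    apply Rle_trans with (Lf * l1_dist x y); [apply Rmult_le_compat_l; unfold l1_dist|]; lra.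
Qed.

Ltac solve_box_lipschitz :=
  repeat first [ apply box_lipschitz_plus | apply box_lipschitz_mult | apply box_lipschitz_inv
               | apply box_lipschitz_fst | apply box_lipschitz_snd | apply box_lipschitz_const ].

Lemma box_lipschitz_rhs_v : box_lipschitz rhs_v.
Proof.
  apply (box_lipschitz_ext (fun a b => - / 4 * b * (1 + a * a) + / 2 * (1 + -1 * (a * a)))).
  - intros a b. unfold rhs_v. simpl. field.
  - solve_box_lipschitz.
Qed.

Lemma box_lipschitz_rhs_p : box_lipschitz rhs_p.
Proof.
  apply (box_lipschitz_ext (fun a b => b * (b * (/ 2 * (/ a + -1 * a)) + -1 * (/ 2 * (/ a + a))))).
  - intros a b. unfold rhs_p, Rf, Qf. ring.
  - solve_box_lipschitz.
Qed.

End Box.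

Lemma right_continuous_of_ex_derive (f : R -> R) t :
  ex_derive f t -> filterlim f (at_right t) (locally (f t)).
Proof.
  intros Hf. eapply filterlim_filter_le_1; [apply filter_le_within|].
  apply (ex_derive_continuous (V := R_NormedModule)), Hf.
Qed.

Lemma at_right_of_continuous_lt (f : R -> R) t c :
  continuous f t -> f t < c -> at_right t (fun s => f s < c).
Proof.
  intros Hf Hc. apply filter_le_within.
  assert (He : 0 < c - f t) by lra.
  apply (filter_imp (fun s => ball (f t) (mkposreal _ He) (f s))).
  - intros s Hs. change (Rabs (f s - f t) < c - f t) in Hs.
    apply Rabs_def2 in Hs. lra.
  - exact (proj1 (filterlim_locally f (f t)) Hf (mkposreal _ He)).
Qed.

Lemma at_right_of_derive_neg (f : R -> R) t d :
  is_derive f t d -> d < 0 -> at_right t (fun s => f s < f t).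
Proof.
  intros Hf Hd. apply is_derive_Reals in Hf.
  destruct (Hf (- d / 2)) as [del Hdel]; [lra|].
  exists del. intros s Hs Hts. change R in s. change (Rabs (s - t) < del) in Hs.
  assert (Hh : s - t <> 0) by lra.
  specialize (Hdel _ Hh Hs). replace (t + (s - t)) with s in Hdel by ring.
  apply Rabs_def2 in Hdel.
  assert (Hq : (f s - f t) / (s - t) < d / 2) by lra.
  apply (Rmult_lt_compat_r (s - t)) in Hq; [|lra].
  replace ((f s - f t) / (s - t) * (s - t)) with (f s - f t) in Hq by (field; lra).
  nra.
Qed.

Lemma barrier_at_right (h : R -> R) t dh :
  is_derive h t dh -> h t <= 0 -> (h t = 0 -> dh < 0) -> at_right t (fun s => h s < 0).
Proof.
  intros Hh Hle Hdh. destruct (Rle_lt_or_eq_dec _ _ Hle) as [Hlt | Heq].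
  - apply at_right_of_continuous_lt; auto.
    apply (ex_derive_continuous (V := R_NormedModule)). exists dh. exact Hh.
  - apply (filter_imp (fun s => h s < h t)); [intros s; lra|].
    apply (at_right_of_derive_neg h t dh Hh (Hdh Heq)).
Qed.

Lemma le_0_of_left_continuous (h : R -> R) s :
  0 < s -> continuous h s -> (forall r, 0 <= r < s -> h r <= 0) -> h s <= 0.
Proof.
  intros Hs Hc Hle. apply Rnot_lt_le. intros Hpos.
  destruct (proj1 (filterlim_locally h (h s)) Hc (mkposreal _ Hpos)) as [del Hdel].
  set (r := s - Rmin del s / 2).
  assert (Hmin : 0 < Rmin del s) by (apply Rmin_pos; [apply cond_pos | lra]).
  pose proof (Rmin_l del s); pose proof (Rmin_r del s).
  assert (Hr : 0 <= r < s) by (unfold r; lra).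
  assert (Hball : Rabs (r - s) < del) by (rewrite Rabs_left; unfold r; lra).
  specialize (Hdel r Hball). change (Rabs (h r - h s) < h s) in Hdel.
  apply Rabs_def2 in Hdel. specialize (Hle r Hr). lra.
Qed.

Lemma continuous_induction (S : R -> Prop) :
  S 0 ->
  (forall s, 0 < s -> (forall r, 0 <= r < s -> S r) -> S s) ->
  (forall s, 0 <= s -> S s -> at_right s S) ->
  forall t, 0 <= t -> S t.
Proof.
  intros H0 Hclosed Hopen t Ht. apply NNPP. intros HnS.
  set (E := fun s => 0 <= s <= t /\ forall r, 0 <= r <= s -> S r).
  assert (HE0 : E 0) by (split; [lra | intros r Hr; replace r with 0 by lra; exact H0]).
  destruct (completeness E) as [ss [Hub Hlub]].
  { exists t. intros s [Hs _]. lra. }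
  { exists 0. exact HE0. }
  assert (Hss : 0 <= ss <= t) by (split; [apply Hub, HE0 | apply Hlub; intros s [Hs _]; lra]).
  assert (Hbelow : forall r, 0 <= r < ss -> S r).
  { intros r Hr. apply NNPP. intros Hn.
    assert (Hr_ub : is_upper_bound E r).
    { intros s [_ Hs]. apply Rnot_lt_le. intros Hrs. apply Hn, Hs. lra. }
    specialize (Hlub r Hr_ub). lra. }
  assert (Hsup : S ss).
  { destruct (Rle_lt_or_eq_dec 0 ss (proj1 Hss)) as [Hpos | <-]; auto. }
  destruct (Hopen ss (proj1 Hss) Hsup) as [del Hdel].
  assert (Hafter : forall r, ss < r < ss + del -> S r).
  { intros r Hr. apply Hdel; [|lra]. change (Rabs (r - ss) < del). rewrite Rabs_right; lra. }
  destruct (Rlt_or_le t (ss + del)) as [Hnear | Hfar].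
  - destruct (Rle_lt_or_eq_dec _ _ (proj2 Hss)) as [Hlt | Heq].
    + apply HnS, Hafter. lra.
    + apply HnS. rewrite <- Heq. exact Hsup.
  - assert (HE : E (ss + del / 2)).
    { pose proof (cond_pos del). split; [lra|].
      intros r Hr. destruct (Rtotal_order r ss) as [Hlt | [-> | Hgt]].
      + apply Hbelow. lra.
      + exact Hsup.
      + apply Hafter. lra. }
    specialize (Hub _ HE). pose proof (cond_pos del). lra.
Qed.

Lemma le_of_derive_nonpos (h dh : R -> R) t : 0 <= t ->
  (forall s, 0 <= s <= t -> is_derive h s (dh s)) -> (forall s, 0 <= s <= t -> dh s <= 0) ->
  h t <= h 0.
Proof.
  intros Ht Hh Hdh. destruct (Rle_lt_or_eq_dec _ _ Ht) as [Hpos | <-]; [|lra].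
  destruct (MVT_cor2 h dh 0 t Hpos) as [c [Hmvt Hc]].
  { intros c Hc. apply is_derive_Reals, Hh, Hc. }
  assert (dh c * (t - 0) <= 0) by (apply Rmult_le_0_r; [apply Hdh | ]; lra).
  lra.
Qed.

Lemma is_lim_exp_decay A k : 0 < k -> is_lim (fun t => A * exp (- (k * t))) p_infty 0.
Proof.
  intros Hk. replace (Finite 0) with (Rbar_mult A 0) by (simpl; f_equal; ring).
  apply is_lim_scal_l. apply (is_lim_comp exp _ p_infty 0 m_infty).
  - apply is_lim_exp_m.
  - replace m_infty with (Rbar_opp (Rbar_mult k p_infty)).
    + apply is_lim_opp, is_lim_scal_l, is_lim_id.
    + simpl. destruct (Rle_dec 0 k) as [H|H]; [|lra].
      destruct (Rle_lt_or_eq_dec 0 k H); [reflexivity | lra].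
  - exists 0. intros x _. discriminate.
Qed.

Lemma is_derive_affine2 (f g : R -> R) t df dg al be ga :
  is_derive f t df -> is_derive g t dg ->
  is_derive (fun s => al + be * f s + ga * g s) t (be * df + ga * dg).
Proof.
  intros Hf Hg.
  pose proof (is_derive_plus (K := R_AbsRing) (V := R_NormedModule) _ _ t _ _
    (is_derive_const al t) (is_derive_scal f t be df Hf)) as H1.
  pose proof (is_derive_plus (K := R_AbsRing) (V := R_NormedModule) _ _ t _ _
    H1 (is_derive_scal g t ga dg Hg)) as H2.
  unfold plus, zero in H2; simpl in H2. rewrite Rplus_0_l in H2. exact H2.
Qed.

Lemma affine_barrier_at_right (f g : R -> R) t df dg al be ga :
  is_derive f t df -> is_derive g t dg ->
  al + be * f t + ga * g t <= 0 ->
  (al + be * f t + ga * g t = 0 -> be * df + ga * dg < 0) ->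
  at_right t (fun s => al + be * f s + ga * g s < 0).
Proof.
  intros Hf Hg. apply (barrier_at_right (fun s => al + be * f s + ga * g s)).
  apply is_derive_affine2; assumption.
Qed.

Lemma p1_Rmax c1 v : p1 c1 v = 1 + c1 * Rmax 0 (v - 1).
Proof.
  unfold p1, Heaviside, Rmax. destruct (Rle_dec 0 (v - 1)); ring.
Qed.

Lemma p2_Rmax c1 v : 0 < v -> p2 c1 v = - 1 - c1 * Rmax 0 (/ v - 1).
Proof.
  intros Hv. unfold p2, Heaviside, Rmax.
  destruct (Rle_dec 0 (1 - v)), (Rle_dec 0 (/ v - 1)); try ring; exfalso.
  - assert (1 <= / v) by (rewrite <- Rinv_1; apply Rinv_le_contravar; lra). lra.
  - assert (/ v < 1) by (rewrite <- Rinv_1; apply Rinv_lt_contravar; lra). lra.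
Qed.

Lemma Rinv_ge_1 v : 0 < v <= 1 -> 1 <= / v.
Proof. intros Hv. rewrite <- Rinv_1. apply Rinv_le_contravar; lra. Qed.

Lemma Rinv_le_1 v : 1 <= v -> / v <= 1.
Proof. intros Hv. rewrite <- Rinv_1. apply Rinv_le_contravar; lra. Qed.

Lemma continuous_p1 c1 v : continuous (p1 c1) v.
Proof.
  apply (continuous_ext (fun v => 1 + c1 * Rmax 0 (v - 1))); [intros; symmetry; apply p1_Rmax|].
  apply (continuous_plus (V := R_NormedModule)); [apply continuous_const|].
  apply (continuous_scal_r (V := R_NormedModule)).
  apply (continuous_comp (fun v => v - 1) (Rmax 0)); [|apply continuous_Rmax0].
  apply (continuous_minus (V := R_NormedModule)); [apply continuous_id | apply continuous_const].
Qed.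

Lemma continuous_p2 c1 v : 0 < v -> continuous (p2 c1) v.
Proof.
  intros Hv. apply (continuous_ext_loc _ (fun v => - 1 - c1 * Rmax 0 (/ v - 1))).
  - assert (Hd : 0 < v / 2) by lra. exists (mkposreal _ Hd). intros y Hy.
    change (Rabs (y - v) < v / 2) in Hy. apply Rabs_def2 in Hy.
    symmetry. apply p2_Rmax. lra.
  - apply (continuous_minus (V := R_NormedModule)); [apply continuous_const|].
    apply (continuous_scal_r (V := R_NormedModule)).
    apply (continuous_comp (fun v => / v - 1) (Rmax 0)); [|apply continuous_Rmax0].
    apply (continuous_minus (V := R_NormedModule)); [|apply continuous_const].
    apply continuous_Rinv. lra.
Qed.

Lemma c1_quadratic_neg c1 : 0 < c1 < (3 + sqrt 73) / 8 -> 4 * c1 ^ 2 - 3 * c1 - 4 < 0.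
Proof.
  intros [H1 H2].
  pose proof (sqrt_lt_R0 73 ltac:(lra)). pose proof (sqrt_sqrt 73 ltac:(lra)).
  destruct (Rle_dec 0 (8 * c1 - 3)); nra.
Qed.

(* The numerator of the derivative of [p - c (v - 1)] along the upper boundary
   [p = 1 + c (v - 1)], written in [x = v - 1]. *)
Lemma upper_boundary_quartic_neg c x : 0 < c -> 4 * c ^ 2 - 3 * c - 4 < 0 -> 0 < x ->
  (2*c-4) + (2*c^2+4*c-8)*x + (4*c^2-3*c-4)*x^2 - (c^2+3*c)*x^3 - c^2*x^4 < 0.
Proof.
  intros Hc Hq Hx.
  assert (c < 3/2) by nra.
  assert (0 < x^2) by nra. assert (0 < x^3) by (simpl; nra). assert (0 < x^4) by (simpl; nra).
  assert ((4*c^2-3*c-4)*x^2 < 0) by nra.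
  assert (0 < c^2*x^4) by (apply Rmult_lt_0_compat; [nra|auto]).
  destruct (Rle_dec (c^2 + 2*c - 4) 0).
  - assert ((2*c^2+4*c-8)*x <= 0) by nra.
    assert (0 <= (c^2+3*c)*x^3) by (apply Rmult_le_pos; nra). lra.
  - assert (4 * x^3 <= (c^2+3*c)*x^3) by (apply Rmult_le_compat_r; nra).
    assert ((2*c^2+4*c-8)*x <= 2 * x) by nra.
    assert (0 <= 4*x^3 - 2*x + 1).
    { replace (4*x^3 - 2*x + 1) with ((2*x-1)^2*(x+1) + x) by ring. nra. }
    lra.
Qed.

Lemma upper_boundary_inward c v : 0 < c -> 4 * c ^ 2 - 3 * c - 4 < 0 -> 1 < v ->
  rhs_p v (1 + c * (v - 1)) - c * rhs_v v (1 + c * (v - 1)) < 0.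
Proof.
  intros Hc Hq Hv.
  replace (rhs_p v (1 + c * (v - 1)) - c * rhs_v v (1 + c * (v - 1)))
    with (((2*c-4) + (2*c^2+4*c-8)*(v-1) + (4*c^2-3*c-4)*(v-1)^2 - (c^2+3*c)*(v-1)^3
           - c^2*(v-1)^4) / (4 * v))
    by (unfold rhs_p, rhs_v, Rf, Qf; field; lra).
  apply Rdiv_neg_pos; [apply upper_boundary_quartic_neg | ]; lra.
Qed.

(* [(v, p) -> (1/v, -p)] is a symmetry of the system exchanging the two curved boundaries. *)
Lemma lower_boundary_inward c v : 0 < c -> 4 * c ^ 2 - 3 * c - 4 < 0 -> 0 < v < 1 ->
  - rhs_p v (- 1 - c * (/ v - 1)) + c * (rhs_v v (- 1 - c * (/ v - 1)) / v ^ 2) < 0.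
Proof.
  intros Hc Hq Hv.
  assert (Hw : 1 < / v) by (rewrite <- Rinv_1; apply Rinv_lt_contravar; lra).
  pose proof (upper_boundary_inward c (/ v) Hc Hq Hw).
  replace (- rhs_p v (- 1 - c * (/ v - 1)) + c * (rhs_v v (- 1 - c * (/ v - 1)) / v ^ 2))
    with (rhs_p (/ v) (1 + c * (/ v - 1)) - c * rhs_v (/ v) (1 + c * (/ v - 1)))
    by (unfold rhs_p, rhs_v, Rf, Qf; field; lra).
  exact H.
Qed.

Lemma p1_of_le_1 c1 v : v <= 1 -> p1 c1 v = 1.
Proof. intros Hv. rewrite p1_Rmax, Rmax_left by lra. ring. Qed.

Lemma p1_of_ge_1 c1 v : 1 <= v -> p1 c1 v = 1 + c1 * (v - 1).
Proof. intros Hv. rewrite p1_Rmax, Rmax_right by lra. ring. Qed.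

Lemma p1_lower_bounds c1 v : 0 <= c1 -> 1 <= p1 c1 v /\ 1 + c1 * (v - 1) <= p1 c1 v.
Proof. intros Hc. rewrite p1_Rmax. pose proof (Rmax_l 0 (v - 1)); pose proof (Rmax_r 0 (v - 1)). nra. Qed.

Lemma p2_of_ge_1 c1 v : 1 <= v -> p2 c1 v = - 1.
Proof.
  intros Hv. pose proof (Rinv_le_1 v Hv). rewrite p2_Rmax, Rmax_left by lra. ring.
Qed.

Lemma p2_of_le_1 c1 v : 0 < v <= 1 -> p2 c1 v = - 1 - c1 * (/ v - 1).
Proof.
  intros Hv. pose proof (Rinv_ge_1 v Hv). rewrite p2_Rmax, Rmax_right by lra. ring.
Qed.

Lemma p2_upper_bounds c1 v : 0 <= c1 -> 0 < v -> p2 c1 v <= - 1 /\ p2 c1 v <= - 1 - c1 * (/ v - 1).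
Proof.
  intros Hc Hv. rewrite p2_Rmax by exact Hv.
  pose proof (Rmax_l 0 (/ v - 1)); pose proof (Rmax_r 0 (/ v - 1)). nra.
Qed.

Lemma rhs_v_pos_small a b : 0 < a <= 1/2 -> b <= 1 -> 0 < rhs_v a b.
Proof. intros Ha Hb. unfold rhs_v. nra. Qed.

Lemma rhs_v_neg_large a b : 2 <= a -> - 1 <= b -> rhs_v a b < 0.
Proof. intros Ha Hb. unfold rhs_v. nra. Qed.

Lemma rhs_p_at_1 a : 0 < a -> rhs_p a 1 = - a.
Proof. intros Ha. unfold rhs_p, Rf, Qf. field. lra. Qed.

Lemma rhs_p_at_m1 a : 0 < a -> rhs_p a (- 1) = / a.
Proof. intros Ha. unfold rhs_p, Rf, Qf. field. lra. Qed.

Section Dynamics.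

Variables (c1 v0 p0 : R).
Hypothesis c1_range : 0 < c1 < (3 + sqrt 73) / 8.
Hypothesis initial_in_Omega : Omega c1 v0 p0.

Let vmin := Rmin v0 (1/2).
Let vmax := Rmax v0 2.
Let pmax := 1 + c1 * (vmax + / vmin).

Lemma vmin_vmax_bounds : 0 < vmin /\ vmin <= 1/2 /\ vmin <= v0 /\ 2 <= vmax /\ v0 <= vmax.
Proof.
  destruct initial_in_Omega as [Hv _]. unfold vmin, vmax.
  repeat split; auto using Rmin_l, Rmin_r, Rmax_l, Rmax_r. apply Rmin_glb_lt; lra.
Qed.

(* Omega cut down to [vmin <= v <= vmax]: a compact set, outside of which the field may be
   modified. *)
Definition region (a b : R) : Prop := vmin <= a <= vmax /\ p2 c1 a <= b <= p1 c1 a.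

Lemma region_in_box a b : region a b -> in_box vmin vmax pmax a b.
Proof.
  intros [Ha [Hb1 Hb2]]. pose proof vmin_vmax_bounds as (Hm & _ & _ & HM & _).
  split; auto. destruct c1_range as [Hc _].
  rewrite p1_Rmax in Hb2. rewrite p2_Rmax in Hb1 by lra.
  assert (/ a <= / vmin) by (apply Rinv_le_contravar; lra).
  assert (0 < / vmin) by (apply Rinv_0_lt_compat; lra).
  assert (Rmax 0 (a - 1) <= vmax) by (apply Rmax_lub; lra).
  assert (Rmax 0 (/ a - 1) <= / vmin) by (apply Rmax_lub; lra).
  unfold pmax. split; nra.
Qed.

Definition field_v (x : R * R) : R := rhs_v (clamp vmin vmax (fst x)) (clamp (- pmax) pmax (snd x)).
Definition field_p (x : R * R) : R := rhs_p (clamp vmin vmax (fst x)) (clamp (- pmax) pmax (snd x)).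

Lemma fields_on_region a b : region a b -> field_v (a, b) = rhs_v a b /\ field_p (a, b) = rhs_p a b.
Proof.
  intros H. destruct (region_in_box a b H) as [Ha Hb].
  unfold field_v, field_p; simpl. rewrite !clamp_id by lra. auto.
Qed.

Lemma truncated_solution_exists : exists w : R -> R * R, w 0 = (v0, p0) /\ forall t, 0 <= t ->
  is_derive (fun s => fst (w s)) t (field_v (w t)) /\
  is_derive (fun s => snd (w s)) t (field_p (w t)).
Proof.
  pose proof vmin_vmax_bounds as (Hm & Hm2 & _ & HM & _).
  assert (Hp : 0 <= pmax).
  { unfold pmax. assert (0 < / vmin) by (apply Rinv_0_lt_compat; lra).
    destruct c1_range. nra. }
  apply global_solution_of_bounded_lipschitz; apply bounded_lipschitz_clamp; try lra.
  - apply box_lipschitz_rhs_v; lra.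
  - apply box_lipschitz_rhs_p; lra.
Qed.

Let kappa := Rmin vmin (/ vmax).

Lemma kappa_pos : 0 < kappa.
Proof.
  pose proof vmin_vmax_bounds as (? & _ & _ & ? & _).
  apply Rmin_glb_lt; [lra | apply Rinv_0_lt_compat; lra].
Qed.

Lemma region_dissipation a b : region a b -> b * Rf a - Qf a <= - kappa.
Proof.
  intros [[Ha1 Ha2] [Hb1 Hb2]]. pose proof vmin_vmax_bounds as (Hm & Hm2 & _ & HM & _).
  assert (Hk1 : kappa <= vmin) by apply Rmin_l.
  assert (Hk2 : kappa <= / vmax) by apply Rmin_r.
  assert (Hinv : / vmax <= / a) by (apply Rinv_le_contravar; lra).
  assert (HQ : 1 <= Qf a).
  { unfold Qf. replace (/ 2 * (/ a + a)) with (1 + (a - 1) ^ 2 / (2 * a)) by (field; lra).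
    assert (0 <= (a - 1) ^ 2 / (2 * a)) by (apply Rdiv_le_0_compat; [apply pow2_ge_0 | lra]).
    lra. }
  assert (HRQ : Rf a - Qf a = - a) by (unfold Rf, Qf; field; lra).
  assert (HRQ' : - Rf a - Qf a = - / a) by (unfold Rf, Qf; field; lra).
  destruct (Rle_dec a 1) as [Hle | Hgt].
  - rewrite p1_of_le_1 in Hb2 by lra.
    assert (0 <= Rf a) by (unfold Rf; pose proof (Rinv_ge_1 a ltac:(lra)); lra).
    destruct (Rle_dec 0 b); nra.
  - rewrite p2_of_ge_1 in Hb1 by lra.
    assert (Rf a < 0) by (unfold Rf; pose proof (Rinv_le_1 a ltac:(lra)); lra).
    destruct (Rle_dec 0 b); nra.
Qed.

Section Trajectory.

Variable w : R -> R * R.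
Hypothesis w_0 : w 0 = (v0, p0).
Hypothesis w_derive : forall t, 0 <= t ->
  is_derive (fun s => fst (w s)) t (field_v (w t)) /\
  is_derive (fun s => snd (w s)) t (field_p (w t)).

Let v s := fst (w s).
Let p s := snd (w s).

Lemma region_at_0 : region (v 0) (p 0).
Proof.
  unfold v, p. rewrite w_0. pose proof vmin_vmax_bounds as (_ & _ & ? & _ & ?).
  destruct initial_in_Omega as (_ & ? & ?). split; simpl; lra.
Qed.

Lemma derive_in_region t : 0 <= t -> region (v t) (p t) ->
  is_derive v t (rhs_v (v t) (p t)) /\ is_derive p t (rhs_p (v t) (p t)).
Proof.
  intros Ht Hreg. destruct (fields_on_region _ _ Hreg) as [Hv Hp].
  unfold v, p in *. rewrite <- surjective_pairing in Hv, Hp.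
  rewrite <- Hv, <- Hp. apply w_derive, Ht.
Qed.

Lemma v_above_vmin_at_right t : 0 <= t -> region (v t) (p t) ->
  at_right t (fun s => vmin < v s).
Proof.
  intros Ht Hreg. destruct (derive_in_region t Ht Hreg) as [Dv Dp].
  pose proof vmin_vmax_bounds as (Hm & Hm2 & _).
  destruct Hreg as [[Hv1 Hv2] [Hp1 Hp2]].
  apply (filter_imp (fun s => vmin + -1 * v s + 0 * p s < 0)); [intros s; lra|].
  apply (affine_barrier_at_right v p t _ _ _ _ _ Dv Dp); [lra|]. intros Heq.
  rewrite p1_of_le_1 in Hp2 by lra.
  pose proof (rhs_v_pos_small (v t) (p t) ltac:(lra) Hp2). lra.
Qed.

Lemma v_below_vmax_at_right t : 0 <= t -> region (v t) (p t) ->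
  at_right t (fun s => v s < vmax).
Proof.
  intros Ht Hreg. destruct (derive_in_region t Ht Hreg) as [Dv Dp].
  pose proof vmin_vmax_bounds as (_ & _ & _ & HM & _).
  destruct Hreg as [[Hv1 Hv2] [Hp1 Hp2]].
  apply (filter_imp (fun s => - vmax + 1 * v s + 0 * p s < 0)); [intros s; lra|].
  apply (affine_barrier_at_right v p t _ _ _ _ _ Dv Dp); [lra|]. intros Heq.
  rewrite p2_of_ge_1 in Hp1 by lra.
  pose proof (rhs_v_neg_large (v t) (p t) ltac:(lra) Hp1). lra.
Qed.

Lemma p_below_p1_at_right t : 0 <= t -> region (v t) (p t) ->
  at_right t (fun s => p s < p1 c1 (v s)).
Proof.
  intros Ht Hreg. destruct (derive_in_region t Ht Hreg) as [Dv Dp].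
  pose proof vmin_vmax_bounds as (Hm & _).
  pose proof (c1_quadratic_neg c1 c1_range) as Hq. destruct c1_range as [Hc _].
  destruct Hreg as [[Hv1 Hv2] [Hp1 Hp2]].
  destruct (Rle_dec (v t) 1) as [Hle | Hgt].
  - apply (filter_imp (fun s => - 1 + 0 * v s + 1 * p s < 0)).
    { intros s Hs. pose proof (p1_lower_bounds c1 (v s) ltac:(lra)). lra. }
    rewrite p1_of_le_1 in Hp2 by lra.
    apply (affine_barrier_at_right v p t _ _ _ _ _ Dv Dp); [lra|]. intros Heq.
    replace (p t) with 1 by lra. rewrite rhs_p_at_1 by lra. lra.
  - apply (filter_imp (fun s => (c1 - 1) + - c1 * v s + 1 * p s < 0)).
    { intros s Hs. pose proof (p1_lower_bounds c1 (v s) ltac:(lra)). lra. }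
    rewrite p1_of_ge_1 in Hp2 by lra.
    apply (affine_barrier_at_right v p t _ _ _ _ _ Dv Dp); [lra|]. intros Heq.
    replace (p t) with (1 + c1 * (v t - 1)) by lra.
    pose proof (upper_boundary_inward c1 (v t) Hc Hq ltac:(lra)). lra.
Qed.

Lemma p_above_p2_at_right t : 0 <= t -> region (v t) (p t) ->
  at_right t (fun s => 0 < v s -> p2 c1 (v s) < p s).
Proof.
  intros Ht Hreg. destruct (derive_in_region t Ht Hreg) as [Dv Dp].
  pose proof vmin_vmax_bounds as (Hm & _).
  pose proof (c1_quadratic_neg c1 c1_range) as Hq. destruct c1_range as [Hc _].
  destruct Hreg as [[Hv1 Hv2] [Hp1 Hp2]].
  destruct (Rle_dec 1 (v t)) as [Hge | Hlt].
  - apply (filter_imp (fun s => - 1 + 0 * v s + -1 * p s < 0)).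
    { intros s Hs Hvs. pose proof (p2_upper_bounds c1 (v s) ltac:(lra) Hvs). lra. }
    rewrite p2_of_ge_1 in Hp1 by lra.
    apply (affine_barrier_at_right v p t _ _ _ _ _ Dv Dp); [lra|]. intros Heq.
    replace (p t) with (- 1) by lra. rewrite rhs_p_at_m1 by lra.
    pose proof (Rinv_0_lt_compat (v t) ltac:(lra)). lra.
  - apply (filter_imp (fun s => (c1 - 1) + - c1 * / v s + -1 * p s < 0)).
    { intros s Hs Hvs. pose proof (p2_upper_bounds c1 (v s) ltac:(lra) Hvs). lra. }
    rewrite p2_of_le_1 in Hp1 by lra.
    pose proof (is_derive_inv v t _ Dv ltac:(lra)) as Dinv.
    apply (affine_barrier_at_right (fun s => / v s) p t _ _ _ _ _ Dinv Dp); [lra|].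
    intros Heq. replace (p t) with (- 1 - c1 * (/ v t - 1)) by lra.
    pose proof (lower_boundary_inward c1 (v t) Hc Hq ltac:(lra)).
    replace (- c1 * (- rhs_v (v t) (- 1 - c1 * (/ v t - 1)) / v t ^ 2))
      with (c1 * (rhs_v (v t) (- 1 - c1 * (/ v t - 1)) / v t ^ 2)) by (field; lra).
    lra.
Qed.

Lemma region_at_right t : 0 <= t -> region (v t) (p t) ->
  at_right t (fun s => region (v s) (p s)).
Proof.
  intros Ht Hreg.
  apply (filter_imp (fun s => (vmin < v s /\ v s < vmax) /\
                               (p s < p1 c1 (v s) /\ (0 < v s -> p2 c1 (v s) < p s)))).
  - intros s [[H1 H2] [H3 H4]]. pose proof vmin_vmax_bounds as (Hm & _).
    split; [lra|]. split; [apply Rlt_le, H4|]; lra.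
  - apply filter_and; apply filter_and;
      auto using v_above_vmin_at_right, v_below_vmax_at_right,
                 p_below_p1_at_right, p_above_p2_at_right.
Qed.

Lemma region_closed s : 0 < s -> (forall r, 0 <= r < s -> region (v r) (p r)) ->
  region (v s) (p s).
Proof.
  intros Hs Hbefore.
  destruct (w_derive s (Rlt_le _ _ Hs)) as [Dv Dp].
  assert (Cv : continuous v s)
    by (apply (ex_derive_continuous (V := R_NormedModule)); eexists; exact Dv).
  assert (Cp : continuous p s)
    by (apply (ex_derive_continuous (V := R_NormedModule)); eexists; exact Dp).
  pose proof vmin_vmax_bounds as (Hm & _).
  assert (H1 : vmin - v s <= 0).
  { apply (le_0_of_left_continuous (fun r => vmin - v r)); auto.
    - apply (continuous_minus (V := R_NormedModule)); auto using continuous_const.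
    - intros r Hr. destruct (Hbefore r Hr) as [[? _] _]. lra. }
  assert (H2 : v s - vmax <= 0).
  { apply (le_0_of_left_continuous (fun r => v r - vmax)); auto.
    - apply (continuous_minus (V := R_NormedModule)); auto using continuous_const.
    - intros r Hr. destruct (Hbefore r Hr) as [[_ ?] _]. lra. }
  assert (H3 : p s - p1 c1 (v s) <= 0).
  { apply (le_0_of_left_continuous (fun r => p r - p1 c1 (v r))); auto.
    - apply (continuous_minus (V := R_NormedModule)); auto.
      apply (continuous_comp v (p1 c1)); auto using continuous_p1.
    - intros r Hr. destruct (Hbefore r Hr) as [_ [_ ?]]. lra. }
  assert (H4 : p2 c1 (v s) - p s <= 0).
  { apply (le_0_of_left_continuous (fun r => p2 c1 (v r) - p r)); auto.
    - apply (continuous_minus (V := R_NormedModule)); auto.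
      apply (continuous_comp v (p2 c1)); auto. apply continuous_p2. lra.
    - intros r Hr. destruct (Hbefore r Hr) as [_ [? _]]. lra. }
  split; split; lra.
Qed.

Lemma region_invariant t : 0 <= t -> region (v t) (p t).
Proof.
  apply (continuous_induction (fun t => region (v t) (p t))).
  - exact region_at_0.
  - exact region_closed.
  - exact region_at_right.
Qed.

Lemma trajectory_derive t : 0 <= t ->
  is_derive v t (rhs_v (v t) (p t)) /\ is_derive p t (rhs_p (v t) (p t)).
Proof. intros Ht. apply derive_in_region, region_invariant; exact Ht. Qed.

Lemma p_exp_decay t : 0 <= t -> Rabs (p t * exp (kappa * t)) <= Rabs p0.
Proof.
  intros Ht. apply Rsqr_le_abs_0.
  set (q s := p s * exp (kappa * s)).
  set (dq s := rhs_p (v s) (p s) * exp (kappa * s) + p s * (kappa * exp (kappa * s))).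
  replace (Rsqr p0) with (Rsqr (q 0))
    by (unfold q, p; rewrite w_0, Rmult_0_r, exp_0, Rmult_1_r; reflexivity).
  apply (le_of_derive_nonpos (fun s => Rsqr (q s)) (fun s => 2 * q s * dq s)); auto.
  - intros s Hs. destruct (trajectory_derive s ltac:(lra)) as [_ Dp].
    assert (Dq : is_derive q s (dq s)).
    { assert (De : is_derive (fun s => exp (kappa * s)) s (kappa * exp (kappa * s)))
        by (auto_derive; [exact I | ring]).
      exact (is_derive_mult (K := R_AbsRing) _ _ s _ _ Dp De Rmult_comm). }
    pose proof (is_derive_mult (K := R_AbsRing) _ _ s _ _ Dq Dq Rmult_comm) as Dq2.
    unfold Rsqr. unfold mult, plus in Dq2; simpl in Dq2.
    replace (2 * q s * dq s) with (dq s * q s + q s * dq s) by ring. exact Dq2.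
  - intros s Hs. pose proof (region_dissipation _ _ (region_invariant s ltac:(lra))).
    pose proof kappa_pos. pose proof (exp_pos (kappa * s)).
    unfold q, dq, rhs_p.
    replace (2 * (p s * exp (kappa * s)) *
      (p s * (p s * Rf (v s) - Qf (v s)) * exp (kappa * s) + p s * (kappa * exp (kappa * s))))
      with (2 * (p s * exp (kappa * s)) ^ 2 * (p s * Rf (v s) - Qf (v s) + kappa)) by ring.
    assert (0 <= (p s * exp (kappa * s)) ^ 2) by apply pow2_ge_0.
    nra.
Qed.

Lemma p_tends_to_0 : is_lim p p_infty 0.
Proof.
  pose proof kappa_pos as Hk.
  apply (is_lim_le_le_loc (fun t => - (Rabs p0 * exp (- (kappa * t))))
                          (fun t => Rabs p0 * exp (- (kappa * t)))).
  - exists 0. intros t Ht. pose proof (p_exp_decay t ltac:(lra)) as H.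
    rewrite Rabs_mult, (Rabs_right (exp _)) in H by (apply Rle_ge, Rlt_le, exp_pos).
    rewrite exp_Ropp.
    assert (Habs : Rabs (p t) <= Rabs p0 * / exp (kappa * t)).
    { pose proof (exp_pos (kappa * t)).
      apply (Rmult_le_reg_r (exp (kappa * t))); [lra|].
      rewrite Rmult_assoc, Rinv_l by lra. lra. }
    apply Rabs_le_between. exact Habs.
  - replace (Finite 0) with (Rbar_opp 0) by (simpl; f_equal; ring).
    apply is_lim_opp, is_lim_exp_decay, Hk.
  - apply is_lim_exp_decay, Hk.
Qed.

End Trajectory.

End Dynamics.

Theorem theorem3p8 (c1 : R) (hc1 : 0 < c1 < (3 + sqrt 73) / 8)
  (v0 p0 : R) (h0 : Omega c1 v0 p0) :
  exists v p : R -> R,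
    v 0 = v0 /\ p 0 = p0 /\
    filterlim v (at_right 0) (locally v0) /\
    filterlim p (at_right 0) (locally p0) /\
    (forall t, 0 < t ->
       is_derive p t (rhs_p (v t) (p t)) /\
       is_derive v t (rhs_v (v t) (p t))) /\
    (forall t, 0 < t -> Omega c1 (v t) (p t)) /\
    (exists m M, 0 < m /\ forall t, 0 <= t -> m <= v t <= M) /\
    is_lim p p_infty 0.
Proof.
  destruct (truncated_solution_exists c1 v0 p0 hc1 h0) as [w [w_0 w_derive]].
  pose proof (region_invariant c1 v0 p0 hc1 h0 w w_0 w_derive) as Hreg.
  pose proof (trajectory_derive c1 v0 p0 hc1 h0 w w_0 w_derive) as Hder.
  pose proof (vmin_vmax_bounds c1 v0 p0 h0) as (Hm & _).
  exists (fun t => fst (w t)), (fun t => snd (w t)).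
  destruct (Hder 0 (Rle_refl 0)) as [Dv0 Dp0].
  split; [rewrite w_0; reflexivity|]. split; [rewrite w_0; reflexivity|].
  split.
  { replace v0 with (fst (w 0)) by (rewrite w_0; reflexivity).
    apply right_continuous_of_ex_derive. eexists. exact Dv0. }
  split.
  { replace p0 with (snd (w 0)) by (rewrite w_0; reflexivity).
    apply right_continuous_of_ex_derive. eexists. exact Dp0. }
  split; [intros t Ht; split; apply Hder; lra|].
  split; [intros t Ht; destruct (Hreg t ltac:(lra)) as [? ?]; split; [lra | assumption]|].
  split; [exists (Rmin v0 (1/2)), (Rmax v0 2); split; [exact Hm | intros t Ht; apply Hreg, Ht]|].
  exact (p_tends_to_0 c1 v0 p0 hc1 h0 w w_0 w_derive).
Qed.
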